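(* Let $n\ge 1$ be an integer and $a,b,c:\{0,1,\dots,n+1\}\to\mathbb{R}$ with $a(k)\neq0$ and $c(k)\neq0$ for $k=0,\dots,n$. Let $\mathsf J(a,b,c)$ be the $(n+2)\times(n+2)$ tridiagonal matrix with rows and columns indexed by $0,\dots,n+1$, diagonal entries $\mathsf J_{kk}=b(k)$ ($k=0,\dots,n+1$), superdiagonal entries $\mathsf J_{k,k+1}=-a(k)$ and subdiagonal entries $\mathsf J_{k+1,k}=-c(k)$ ($k=0,\dots,n$), and all other entries $0$. Then $\mathsf J(a,b,c)$ is invertible if and only if $D_{\mathsf J}\neq0$, and in that case the entries of its inverse $\mathsf R=(r_{ks})_{k,s=0}^{n+1}$ are $$r_{ks}=\frac{1}{D_{\mathsf J}}\begin{cases}\Big(\prod_{j=k}^{s-1}a(j)\Big)\Phi_{\mathsf J}(k)\Psi_{\mathsf J}(s), & 0\le k\le s\le n+1,\\[1ex] \Big(\prod_{j=s}^{k-1}c(j)\Big)\Phi_{\mathsf J}(s)\Psi_{\mathsf J}(k), & 0\le s\le k\le n+1.\end{cases}$$ Moreover, $\det\mathsf R=D_{\mathsf J}^{-1}$.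
   Context: Empty products equal $1$ and empty sums equal $0$. For $m\in\mathbb{N}$ and a sequence $x$, the shift $x_m$ is $x_m(j)=x(j+m)$; $ac$ denotes the pointwise product $(ac)(j)=a(j)c(j)$. Chebyshev functions: for sequences $x,y$ set $P_{-1}(x,y)=0$, $P_0(x,y)=1$, and for $k\ge1$ $$P_k(x,y)=\sum_{m=0}^{\lfloor k/2\rfloor}(-1)^m\sum_{\alpha\in\ell_k^m}x^{\bar\alpha}y^{\alpha},$$ where: for $\alpha=(\alpha_1,\dots,\alpha_k)\in\{0,1\}^k$, $x^\alpha=\prod_{j=1}^k x(j)^{\alpha_j}$ and $|\alpha|=\sum_j\alpha_j$; $\ell_k^0=\{(0,\dots,0)\}$; for $m\ge1$, $\ell_k^m$ is the set of $\alpha\in\{0,1\}^k$ with $\alpha_k=0$, $|\alpha|=m$, and whose positions of ones $i_1<\dots<i_m$ satisfy $i_{j+1}-i_j\ge2$ for $j=1,\dots,m-1$; and $\bar\alpha\in\{0,1\}^k$ is defined by $\bar\alpha_{i_j}=\bar\alpha_{i_j+1}=0$ for $j=1,\dots,m$ and $\bar\alpha_i=1$ otherwise. Define $\Phi_{\mathsf J}(0)=1$, $\Phi_{\mathsf J}(k)=b(0)P_{k-1}(b,ac)-a(0)c(0)P_{k-2}(b_1,a_1c_1)$ for $k=1,\dots,n+1$; $\Psi_{\mathsf J}(k)=b(n+1)P_{n-k}(b_k,a_kc_k)-a(n)c(n)P_{n-k-1}(b_k,a_kc_k)$ for $k=0,\dots,n$, and $\Psi_{\mathsf J}(n+1)=1$;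 $D_{\mathsf J}=b(0)\big[b(n+1)P_n(b,ac)-a(n)c(n)P_{n-1}(b,ac)\big]-a(0)c(0)\big[b(n+1)P_{n-1}(b_1,a_1c_1)-a(n)c(n)P_{n-2}(b_1,a_1c_1)\big]$. *)

From HB Require Import structures.
From mathcomp Require Import all_boot all_order all_algebra.
Set Implicit Arguments. Unset Strict Implicit. Unset Printing Implicit Defensive.
Import Order.TTheory GRing.Theory Num.Theory.
Local Open Scope ring_scope.

Section Defs.
Variable R : realFieldType.

Definition shiftseq (x : nat -> R) (m : nat) : nat -> R := fun j => x (j + m)%N.

Definition pmul (x y : nat -> R) : nat -> R := fun j => x j * y j.

(* alpha in {0,1}^k is represented by a finite function on 'I_k; position
   i : 'I_k stands for the paper's (1-based) position i+1. *)

Definition alphabar (k : nat) (al : {ffun 'I_k -> bool}) (i : 'I_k) : bool :=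
  ~~ [exists j : 'I_k, al j && ((i == j) || (nat_of_ord i == (nat_of_ord j).+1))].

Definition ell (k m : nat) (al : {ffun 'I_k -> bool}) : bool :=
  if m == 0%N then [forall i, ~~ al i]
  else [&& [forall i : 'I_k, al i ==> ((nat_of_ord i).+1 < k)%N],
           #|[pred i | al i]| == m &
           [forall i : 'I_k, forall j : 'I_k,
              (al i && al j && (i < j)%N) ==> ((nat_of_ord i).+2 <= j)%N]].

Definition monom (k : nat) (x y : nat -> R) (al : {ffun 'I_k -> bool}) : R :=
  \prod_(i < k) (x (i.+1) ^+ alphabar al i * y (i.+1) ^+ al i).

Definition cheb_nat (x y : nat -> R) (k : nat) : R :=
  if k == 0%N then 1 else
  \sum_(m < (k./2).+1) (-1) ^+ m * \sum_(al : {ffun 'I_k -> bool} | ell m al) monom x y al.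

(* P_k on integer indices: P_{-1} = 0 (only k = -1 is ever used among negatives) *)
Definition cheb (x y : nat -> R) (k : int) : R :=
  match k with
  | Posz k => cheb_nat x y k
  | Negz _ => 0
  end.

Variables (a b c : nat -> R) (n : nat).

Definition ac := pmul a c.

Definition PhiJ (k : nat) : R :=
  if k == 0%N then 1 else
  b 0%N * cheb b ac (k%:Z - 1) - a 0%N * c 0%N * cheb (shiftseq b 1) (shiftseq ac 1) (k%:Z - 2).

Definition PsiJ (k : nat) : R :=
  if k == n.+1 then 1 else
  b n.+1 * cheb (shiftseq b k) (shiftseq ac k) ((n - k)%N%:Z)
  - a n * c n * cheb (shiftseq b k) (shiftseq ac k) ((n - k)%N%:Z - 1).

Definition DJ : R :=
  b 0%N * (b n.+1 * cheb b ac n%:Z - a n * c n * cheb b ac (n%:Z - 1))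
  - a 0%N * c 0%N * (b n.+1 * cheb (shiftseq b 1) (shiftseq ac 1) (n%:Z - 1)
                     - a n * c n * cheb (shiftseq b 1) (shiftseq ac 1) (n%:Z - 2)).

Definition Jmat : 'M[R]_(n.+2) :=
  \matrix_(i, j) (if i == j then b i
                  else if (nat_of_ord j == (nat_of_ord i).+1) then - a i
                  else if (nat_of_ord i == (nat_of_ord j).+1) then - c j
                  else 0).

Definition rJ (k s : nat) : R :=
  if (k <= s)%N then (\prod_(k <= j < s) a j) * PhiJ k * PsiJ s / DJ
  else (\prod_(s <= j < k) c j) * PhiJ s * PsiJ k / DJ.

End Defs.

(* Splitting off the last bit of the bit strings shows that the Chebyshev
   functions satisfy the continuant recurrence
   P_{k+1}(x,y) = x(k+1) P_k(x,y) - y(k) P_{k-1}(x,y).  Hence Phi_J solves the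
   three-term recurrence (J u)(k) = 0 started at the left end and Psi_J the one
   started at the right end; their Casoratian
   Phi_J(k+1) Psi_J(k) - a(k) c(k) Phi_J(k) Psi_J(k+1) is constant, equal to
   D_J, so the matrix G of numerators of the r_ks satisfies J G = D_J I.
   Finally J times the identity with its first column replaced by the last
   column of G (a triangular matrix of determinant a(0)...a(n)) has first
   column D_J e_{n+1}, and expanding along it gives det J = D_J. *)

From HB Require Import structures.
From mathcomp Require Import all_boot all_order all_algebra.
From mathcomp Require Import ring zify.
Set Implicit Arguments. Unset Strict Implicit. Unset Printing Implicit Defensive.
Import Order.TTheory GRing.Theory Num.Theory.
Local Open Scope ring_scope.

Lemma exists_ord_recr k (P : pred 'I_k.+1) :
  [exists j, P j] = [exists j : 'I_k, P (lift ord_max j)] || P ord_max.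
Proof.
apply/existsP/orP => [[j]|[/existsP[j Pj]|Pmax]]; last 2 first.
- by exists (lift ord_max j).
- by exists ord_max.
case: (unliftP ord_max j) => [j' ->|->] Pj; last by right.
by left; apply/existsP; exists j'.
Qed.

Lemma forall_ord_recr k (P : pred 'I_k.+1) :
  [forall j, P j] = [forall j : 'I_k, P (lift ord_max j)] && P ord_max.
Proof.
apply/forallP/andP => [P_all|[/forallP P_lift Pmax] j].
  by split; [apply/forallP => j|].
by case: (unliftP ord_max j) => [j' ->|->].
Qed.

Lemma widen_ord_lift_max k (j : 'I_k) : widen_ord (leqnSn k) j = lift ord_max j.
Proof. exact/val_inj/esym/lift_max. Qed.

Section FfunRcons.
Variable T : finType.

Definition ffun_rcons k (g : {ffun 'I_k -> T}) (v : T) : {ffun 'I_k.+1 -> T} :=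
  [ffun i => if unlift ord_max i is Some j then g j else v].

Lemma ffun_rcons_max k (g : {ffun 'I_k -> T}) v : ffun_rcons g v ord_max = v.
Proof. by rewrite ffunE unlift_none. Qed.

Lemma ffun_rcons_lift k (g : {ffun 'I_k -> T}) v j : ffun_rcons g v (lift ord_max j) = g j.
Proof. by rewrite ffunE liftK. Qed.

Lemma big_ffun_rcons (V : nmodType) k (F : {ffun 'I_k.+1 -> T} -> V) :
  \sum_f F f = \sum_(g : {ffun 'I_k -> T}) \sum_v F (ffun_rcons g v).
Proof.
rewrite pair_big /= (reindex (fun p => ffun_rcons p.1 p.2)) //.
exists (fun f : {ffun 'I_k.+1 -> T} => ([ffun j => f (lift ord_max j)], f ord_max)).
  move=> [g v] _ /=.
  by congr pair; [apply/ffunP => j; rewrite ffunE ffun_rcons_lift | exact: ffun_rcons_max].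
move=> f _; apply/ffunP => i; case: (unliftP ord_max i) => [j ->|->].
  by rewrite ffun_rcons_lift ffunE.
by rewrite ffun_rcons_max.
Qed.

Lemma big_ffun_ord0 (V : nmodType) (F : {ffun 'I_0 -> T} -> V) f0 :
  \sum_f F f = F f0.
Proof. by rewrite (big_pred1 f0) // => f; apply/esym/eqP/ffunP => -[]. Qed.

End FfunRcons.

Definition count_ones k (f : {ffun 'I_k -> bool}) := #|[pred i | f i]|.

Definition sparse k (f : {ffun 'I_k -> bool}) :=
  [forall i : 'I_k, forall j : 'I_k, (f i && f j && (i < j)%N) ==> (i.+2 <= j)%N].

Definition ends_in_zero k (f : {ffun 'I_k -> bool}) :=
  [forall i : 'I_k, f i ==> (i.+1 < k)%N].

Lemma ellE k m (al : {ffun 'I_k -> bool}) :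
  ell m al = [&& ends_in_zero al, sparse al & count_ones al == m].
Proof.
rewrite /ell; case: eqP => [->|_]; last first.
  rewrite /ends_in_zero /sparse /count_ones.
  by case: [forall i, _]; case: [forall i, _]; case: (_ == m).
have -> : (count_ones al == 0%N) = [forall i, ~~ al i].
  apply/eqP/forallP => [al0 i|al0]; last by apply: eq_card0 => i; rewrite inE (negbTE (al0 i)).
  by apply/negP => ali; have := card0_eq al0 i; rewrite inE ali.
case: (boolP [forall i, ~~ al i]) => [/forallP al0|]; last by rewrite !andbF.
by apply/esym/and3P; split=> //; apply/forallP => i;
  [rewrite (negbTE (al0 i)) | apply/forallP => j; rewrite (negbTE (al0 i))].
Qed.

Lemma count_ones_rcons k (g : {ffun 'I_k -> bool}) v :
  count_ones (ffun_rcons g v) = (count_ones g + v)%N.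
Proof.
rewrite /count_ones -!sum1_card big_mkcond /= big_ord_recr /= [in RHS]big_mkcond /=.
rewrite inE ffun_rcons_max; congr (_ + _)%N.
by apply: eq_bigr => i _; rewrite widen_ord_lift_max !inE ffun_rcons_lift.
Qed.

Lemma ends_in_zero_rcons k (g : {ffun 'I_k -> bool}) v :
  ends_in_zero (ffun_rcons g v) = ~~ v.
Proof.
rewrite /ends_in_zero forall_ord_recr ffun_rcons_max ltnn implybF.
by rewrite [X in X && _](introT forallP) // => j; rewrite lift_max ltnS ltn_ord implybT.
Qed.

Lemma sparse_rcons k (g : {ffun 'I_k -> bool}) v :
  sparse (ffun_rcons g v) = sparse g && (v ==> ends_in_zero g).
Proof.
apply/forallP/andP => [sp|[/forallP sp ends] i].
  split.
    apply/forallP => i; apply/forallP => j.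
    by have /forallP/(_ (lift ord_max j)) := sp (lift ord_max i);
      rewrite !ffun_rcons_lift !lift_max.
  apply/implyP => vT; apply/forallP => i; apply/implyP => gi.
  have /forallP/(_ ord_max) := sp (lift ord_max i).
  by rewrite ffun_rcons_lift ffun_rcons_max lift_max gi vT /= ltn_ord.
apply/forallP => j.
case: (unliftP ord_max i) => [i' ->|->]; case: (unliftP ord_max j) => [j' ->|->].
- by rewrite !ffun_rcons_lift !lift_max; have /forallP := sp i'.
- rewrite ffun_rcons_lift ffun_rcons_max lift_max /= ltn_ord andbT.
  apply/implyP => /andP[gi vT].
  by move: ends; rewrite vT => /forallP/(_ i'); rewrite gi.
- by rewrite lift_max /= ltnNge ltnW // andbF.
- by rewrite /= ltnn andbF.
Qed.

Section Continuant.
Variable R : comPzRingType.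
Implicit Types (x y : nat -> R) (k : nat).

Fixpoint continuant x y k : R :=
  if k is k1.+1 then
    if k1 is k2.+1 then x k1 * continuant x y k1 - y k2 * continuant x y k2 else 1
  else 0.

Lemma continuantSS x y k :
  continuant x y k.+2 = x k.+1 * continuant x y k.+1 - y k * continuant x y k.
Proof. by case: k => [|k] /=; rewrite ?mulr1 ?mulr0 ?subr0. Qed.

Lemma continuant_shiftSS x y j k :
  continuant (fun i => x (i + j)%N) (fun i => y (i + j)%N) k.+2 =
  x j.+1 * continuant (fun i => x (i + j.+1)%N) (fun i => y (i + j.+1)%N) k.+1
  - y j.+1 * continuant (fun i => x (i + j.+2)%N) (fun i => y (i + j.+2)%N) k.
Proof.
elim/ltn_ind: k => -[|[|k]] IH; try by rewrite /= !addSn !add0n; ring.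
rewrite [LHS]continuantSS !IH // (continuantSS _ _ k.+1).
rewrite (continuantSS (fun i => x (i + j.+2)%N)).
by cbv beta; rewrite !addSn !addnS; ring.
Qed.

End Continuant.

Section Chebyshev.
Variable R : realFieldType.
Implicit Types (x y : nat -> R) (k : nat).

Lemma alphabar_rcons_lift k (g : {ffun 'I_k -> bool}) v i :
  alphabar (ffun_rcons g v) (lift ord_max i) = alphabar g i.
Proof.
rewrite /alphabar exists_ord_recr ffun_rcons_max.
have -> : ((lift ord_max i : nat) == k.+1) = false by rewrite lift_max ltn_eqF // leqW.
have -> : (lift ord_max i == ord_max) = false by rewrite eq_sym (negbTE (neq_lift _ _)).
rewrite orbF andbF orbF.
by congr (~~ _); apply: eq_existsb => j; rewrite ffun_rcons_lift (inj_eq lift_inj) !lift_max.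
Qed.

Lemma alphabar_rcons_max k (g : {ffun 'I_k -> bool}) v :
  alphabar (ffun_rcons g v) ord_max = ~~ v && ends_in_zero g.
Proof.
rewrite /alphabar exists_ord_recr ffun_rcons_max eqxx andbT negb_or andbC.
congr (_ && _); rewrite negb_exists; apply: eq_forallb => j.
rewrite ffun_rcons_lift (negbTE (neq_lift _ _)) lift_max /= negb_and -implybE.
by rewrite ltn_neqAle ltn_ord andbT eq_sym.
Qed.

Lemma monom_rcons x y k (g : {ffun 'I_k -> bool}) v :
  monom x y (ffun_rcons g v) =
  monom x y g * x k.+1 ^+ (~~ v && ends_in_zero g) * y k.+1 ^+ v.
Proof.
rewrite /monom big_ord_recr /= alphabar_rcons_max ffun_rcons_max mulrA.
by congr (_ * _ * _); apply: eq_bigr => i _;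
  rewrite widen_ord_lift_max alphabar_rcons_lift ffun_rcons_lift.
Qed.

(* Bounding the number of ones by an independent M makes the recurrence
   cheb_truncSS hold without first proving that a sparse string of length k
   has at most k./2 ones. *)
Definition cheb_trunc x y k M :=
  \sum_(f : {ffun 'I_k -> bool} | [&& ends_in_zero f, sparse f & count_ones f < M]%N)
     (-1) ^+ count_ones f * monom x y f.

Lemma cheb_trunc_rcons x y k M :
  cheb_trunc x y k.+1 M =
  \sum_(g : {ffun 'I_k -> bool} | sparse g && (count_ones g < M)%N)
     (-1) ^+ count_ones g * monom x y g * x k.+1 ^+ ends_in_zero g.
Proof.
rewrite /cheb_trunc big_mkcond big_ffun_rcons [RHS]big_mkcond.
apply: eq_bigr => g _; rewrite big_bool.
rewrite !ends_in_zero_rcons !sparse_rcons !count_ones_rcons !monom_rcons /=.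
by rewrite andbT addn0 add0r expr0 mulr1 mulrA.
Qed.

Lemma cheb_truncSS x y k M :
  cheb_trunc x y k.+2 M.+1 =
  x k.+2 * cheb_trunc x y k.+1 M.+1 - y k.+1 * cheb_trunc x y k M.
Proof.
rewrite !cheb_trunc_rcons big_mkcond big_ffun_rcons /cheb_trunc.
rewrite [X in x _ * X]big_mkcond [X in y _ * X]big_mkcond !mulr_sumr -sumrB.
apply: eq_bigr => h _; rewrite big_bool.
rewrite !sparse_rcons !count_ones_rcons !monom_rcons !ends_in_zero_rcons /=.
rewrite andbT addn0 addn1 !ltnS.
by case: (sparse h); case: (ends_in_zero h); case: ltngtP => _ /=; rewrite ?exprS; ring.
Qed.

Lemma empty_bitstring (f : {ffun 'I_0 -> bool}) :
  [&& ends_in_zero f, sparse f & count_ones f == 0%N].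
Proof.
apply/and3P; split; try by apply/forallP => -[].
by apply/eqP/eq_card0 => -[].
Qed.

Lemma cheb_trunc0 x y M : cheb_trunc x y 0 M.+1 = 1.
Proof.
rewrite /cheb_trunc big_mkcond (big_ffun_ord0 _ [ffun=> false]).
have /and3P[-> -> /eqP->] := empty_bitstring [ffun=> false].
by rewrite /monom big_ord0 mulr1.
Qed.

Lemma cheb_trunc1 x y M : cheb_trunc x y 1 M.+1 = x 1%N.
Proof.
rewrite cheb_trunc_rcons big_mkcond (big_ffun_ord0 _ [ffun=> false]).
have /and3P[-> -> /eqP->] := empty_bitstring [ffun=> false].
by rewrite /monom big_ord0 !mul1r.
Qed.

Lemma cheb_trunc_continuant x y k M :
  (k./2 < M)%N -> cheb_trunc x y k M = continuant x y k.+1.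
Proof.
elim/ltn_ind: k M => -[|[|k]] IH [|M] // lt_k_M.
- exact: cheb_trunc0.
- by rewrite cheb_trunc1 /= mulr1 mulr0 subr0.
rewrite cheb_truncSS (continuantSS x y k.+1) !IH //.
by apply: leq_ltn_trans (half_leq (leqnSn k.+1)) _.
Qed.

Lemma cheb_natE x y k : cheb_nat x y k = continuant x y k.+1.
Proof.
rewrite /cheb_nat; case: eqP => [->|_]; first by [].
rewrite -(@cheb_trunc_continuant _ _ _ (k./2).+1) //.
under eq_bigr => m _ do rewrite mulr_sumr big_mkcond.
rewrite exchange_big /cheb_trunc [RHS]big_mkcond; apply: eq_bigr => al _.
under eq_bigr => m _ do rewrite ellE.
case: (ends_in_zero al); case: (sparse al) => /=; try by rewrite big1.
rewrite -big_mkcond /=.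
under eq_bigl => m do rewrite eq_sym.
by rewrite (big_ord1_eq _ (fun m => (-1) ^+ m * monom x y al)).
Qed.


Lemma chebE x y k : cheb x y k%:Z = continuant x y k.+1.
Proof. exact: cheb_natE. Qed.

Lemma cheb_sub1 x y k : cheb x y (k%:Z - 1) = continuant x y k.
Proof.
by case: k => [|k]; [reflexivity | rewrite -[in Posz _]addn1 PoszD addrK chebE].
Qed.

Lemma cheb_sub2 x y k : cheb x y (k%:Z - 2) = continuant x y k.-1.
Proof.
case: k => [|[|k]]; try reflexivity.
by rewrite -[in Posz _]addn2 PoszD addrK chebE.
Qed.

End Chebyshev.

Lemma sum_ord_delta (R : pzSemiRingType) N m (F : nat -> R) :
  \sum_(j < N) ((j : nat) == m)%:R * F j = if (m < N)%N then F m else 0.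
Proof.
rewrite (eq_bigr (fun j : 'I_N => if (j : nat) == m then F j else 0)).
  by rewrite -big_mkcond big_ord1_eq.
by move=> j _; case: eqP; rewrite ?mul1r ?mul0r.
Qed.

Section Tridiagonal.
Variables (R : realFieldType) (a b c : nat -> R) (n : nat).

Local Notation Phi := (PhiJ a b c).
Local Notation Psi := (PsiJ a b c n).
Local Notation D := (DJ a b c n).
Local Notation J := (Jmat a b c n).
Local Notation r := (rJ a b c n).

Lemma PhiJ_continuant k : Phi k.+1 =
  b 0%N * continuant b (ac a c) k.+1
  - a 0%N * c 0%N * continuant (shiftseq b 1) (shiftseq (ac a c) 1) k.
Proof. by rewrite /PhiJ cheb_sub1 cheb_sub2. Qed.

Lemma PhiJ0 : Phi 0 = 1.
Proof. by []. Qed.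

Lemma PhiJ1 : Phi 1 = b 0%N.
Proof. by rewrite PhiJ_continuant /= mulr1 mulr0 subr0. Qed.

Lemma PhiJSS k : Phi k.+2 = b k.+1 * Phi k.+1 - ac a c k * Phi k.
Proof.
rewrite !PhiJ_continuant (continuantSS b); case: k => [|k].
  by rewrite PhiJ0 /= /ac /pmul /shiftseq; ring.
rewrite (PhiJ_continuant k) (continuantSS (shiftseq b 1)).
by rewrite /ac /pmul /shiftseq !addn1; ring.
Qed.

(* For n = 0 the formula for D_J involves P_{-2}, which cheb sets to 0. *)
Lemma DJ_PhiJ : (1 <= n)%N -> D = Phi n.+2.
Proof.
case: n => [//|m] _.
rewrite /DJ PhiJ_continuant cheb_sub2 !cheb_sub1 chebE.
rewrite (continuantSS b _ m.+1) (continuantSS (shiftseq b 1) _ m) [m.+1.-1]/=.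
by rewrite /ac /pmul /shiftseq !addn1; ring.
Qed.

Lemma PsiJ_last : Psi n.+1 = 1.
Proof. by rewrite /PsiJ eqxx. Qed.

Lemma PsiJ_continuant j : (j <= n.+1)%N ->
  Psi j = continuant (shiftseq b j) (shiftseq (ac a c) j) (n.+2 - j).
Proof.
rewrite leq_eqVlt => /orP[/eqP->|lt_jn]; first by rewrite PsiJ_last subSnn.
have -> : (n.+2 - j = (n - j).+2)%N by lia.
rewrite /PsiJ (ltn_eqF lt_jn) cheb_sub1 chebE continuantSS.
by rewrite /shiftseq addSn subnK.
Qed.

Lemma PsiJ_n : Psi n = b n.+1.
Proof.
rewrite PsiJ_continuant // (_ : n.+2 - n = 2)%N; last by lia.
by rewrite /= mulr1 mulr0 subr0 /shiftseq add1n.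
Qed.

Lemma PsiJ_rec j : (j < n)%N -> Psi j = b j.+1 * Psi j.+1 - ac a c j.+1 * Psi j.+2.
Proof.
move=> lt_jn; rewrite !PsiJ_continuant; try lia.
have -> : (n.+2 - j = (n - j.+1).+3)%N by lia.
have -> : (n.+2 - j.+1 = (n - j.+1).+2)%N by lia.
have -> : (n.+2 - j.+2 = (n - j.+1).+1)%N by lia.
exact: continuant_shiftSS.
Qed.

Lemma PhiJ_PsiJ_casoratian k : (1 <= n)%N -> (k <= n)%N ->
  Phi k.+1 * Psi k - ac a c k * Phi k * Psi k.+1 = D.
Proof.
move=> n_gt0 /subnK; move: (n - k)%N => i; elim: i k => [|i IH] k def_n.
  by move: def_n; rewrite add0n => ->; rewrite PsiJ_n PsiJ_last DJ_PhiJ // PhiJSS; ring.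
rewrite -(IH k.+1) -?addSnnS // PhiJSS (PsiJ_rec (_ : k < n)%N); last by lia.
ring.
Qed.

Definition jacobi_op (f : nat -> R) k := b k * f k
  - (if (k < n.+1)%N then a k * f k.+1 else 0) - (if k is k'.+1 then c k' * f k' else 0).

Lemma Jmat_delta (k j : 'I_n.+2) : J k j =
  (j == k :> nat)%:R * b k - (j == k.+1 :> nat)%:R * a k - (k == j.+1 :> nat)%:R * c j.
Proof.
rewrite mxE -val_eqE /= [(j == k :> nat)]eq_sym.
case: (eqVneq (k : nat) j) => [->|ne_kj].
  by rewrite (ltn_eqF (ltnSn j)) /=; ring.
case: (eqVneq (j : nat) k.+1) => [->|ne_jk].
  by rewrite (ltn_eqF (ltnW (ltnSn k.+1))) /=; ring.
by case: (k == j.+1 :> nat) => /=; ring.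
Qed.

Lemma sum_Jmat_row (k : 'I_n.+2) (f : nat -> R) :
  \sum_j J k j * f j = jacobi_op f k.
Proof.
under eq_bigr => j _ do rewrite Jmat_delta !mulrBl -!mulrA.
rewrite !sumrB (sum_ord_delta _ _ (fun i => b k * f i)).
rewrite (sum_ord_delta _ _ (fun i => a k * f i)).
rewrite ltn_ord ltnS /jacobi_op; congr (_ - _).
case: (nat_of_ord k) (ltn_ord k) => [|k'] lt_k.
  by rewrite big1 // => j _; rewrite /= mulr0n mul0r.
under eq_bigr => j _ do rewrite eqSS eq_sym.
by rewrite (sum_ord_delta _ _ (fun i => c i * f i)) (ltnW lt_k).
Qed.

Definition green k s :=
  if (k <= s)%N then (\prod_(k <= j < s) a j) * Phi k * Psi s
  else (\prod_(s <= j < k) c j) * Phi s * Psi k.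

Lemma green_upper k s :
  (k <= s)%N -> green k s = (\prod_(k <= j < s) a j) * Phi k * Psi s.
Proof. by move=> le_ks; rewrite /green le_ks. Qed.

Lemma green_lower k s :
  (s <= k)%N -> green k s = (\prod_(s <= j < k) c j) * Phi s * Psi k.
Proof.
move=> le_sk; rewrite /green; case: leqP => // le_ks.
have -> : k = s by apply/eqP; rewrite eqn_leq le_ks le_sk.
by rewrite !big_geq.
Qed.

Lemma jacobi_op_green_upper k s :
  (k < s)%N -> (s <= n.+1)%N -> jacobi_op (green^~ s) k = 0.
Proof.
move=> lt_ks le_sn; rewrite /jacobi_op (leq_trans lt_ks le_sn).
rewrite (green_upper (ltnW lt_ks)) (green_upper lt_ks) (big_ltn lt_ks).
case: k lt_ks => [|k] lt_ks; first by rewrite PhiJ0 PhiJ1; ring.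
rewrite (green_upper (ltnW (ltnW lt_ks))) (big_ltn (ltnW lt_ks)) (big_ltn lt_ks).
by rewrite PhiJSS /ac /pmul; ring.
Qed.

Lemma jacobi_op_green_lower k s :
  (s < k)%N -> (k <= n.+1)%N -> jacobi_op (green^~ s) k = 0.
Proof.
case: k => [//|k]; rewrite ltnS => le_sk le_kn.
rewrite /jacobi_op (green_lower le_sk) (green_lower (leqW le_sk)).
rewrite (green_lower (leqW (leqW le_sk))).
rewrite (big_nat_recr _ _ _ (leqW le_sk)) (big_nat_recr _ _ _ le_sk) /=.
case: ltnP => [lt_kn|le_nk]; first by rewrite (PsiJ_rec lt_kn) /ac /pmul; ring.
have -> : k = n by lia.
by rewrite PsiJ_n PsiJ_last; ring.
Qed.

Lemma jacobi_op_green_diag s :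
  (1 <= n)%N -> (s <= n.+1)%N -> jacobi_op (green^~ s) s = D.
Proof.
move=> n_gt0 le_sn.
have -> : jacobi_op (green^~ s) s = Phi s.+1 * Psi s
    - (if (s < n.+1)%N then ac a c s * Phi s * Psi s.+1 else 0).
  rewrite /jacobi_op (green_upper (leqnn s)) (green_lower (leqnSn s)) big_geq // big_nat1.
  case: (s < n.+1)%N; case: s {le_sn} => [|s];
    rewrite ?PhiJ0 ?PhiJ1 ?(green_upper (leqnSn _)) ?big_nat1 ?PhiJSS /ac /pmul; ring.
case: ltnP => [lt_sn|le_ns]; first by rewrite PhiJ_PsiJ_casoratian.
have -> : s = n.+1 by lia.
by rewrite PsiJ_last subr0 mulr1 -DJ_PhiJ.
Qed.

Lemma jacobi_op_green k s : (1 <= n)%N -> (k <= n.+1)%N -> (s <= n.+1)%N ->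
  jacobi_op (green^~ s) k = D *+ (k == s).
Proof.
move=> n_gt0 le_kn le_sn; case: ltngtP => [lt_ks|lt_sk|->].
- by rewrite jacobi_op_green_upper.
- by rewrite jacobi_op_green_lower.
- by rewrite jacobi_op_green_diag.
Qed.

Definition greenmx : 'M[R]_n.+2 := \matrix_(i, j) green i j.

Lemma Jmat_mul_greenmx : (1 <= n)%N -> J *m greenmx = D%:M.
Proof.
move=> n_gt0; apply/matrixP => k s; rewrite !mxE -val_eqE.
rewrite -(jacobi_op_green n_gt0 (ltn_ord k) (ltn_ord s)) -sum_Jmat_row.
by apply: eq_bigr => j _; rewrite [X in _ * X]mxE.
Qed.

Lemma rJmx_greenmx : \matrix_(i, j) r i j = D^-1 *: greenmx.
Proof.
by apply/matrixP => i j; rewrite !mxE /rJ /green; case: leqP => _; rewrite mulrC.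
Qed.

Lemma Jmat_mul_rJmx : (1 <= n)%N -> D != 0 -> J *m \matrix_(i, j) r i j = 1%:M.
Proof.
move=> n_gt0 D_neq0.
by rewrite rJmx_greenmx -scalemxAr Jmat_mul_greenmx // scale_scalar_mx mulVf.
Qed.

Definition green_col_mx : 'M[R]_n.+2 :=
  \matrix_(i, j) if j == ord0 then green i n.+1 else (i == j)%:R.

Lemma det_green_col_mx : \det green_col_mx = \prod_(i < n.+1) a i.
Proof.
rewrite det_trig; last first.
  apply/forallP => i; apply/forallP => j; apply/implyP => lt_ij; rewrite mxE.
  by rewrite -!val_eqE /= gtn_eqF ?(leq_trans _ lt_ij) ?ltn_eqF.
rewrite big_ord_recl big1 => [|i _]; last first.
  by rewrite mxE eq_sym (negbTE (neq_lift _ _)) eqxx.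
by rewrite /= mulr1 mxE eqxx green_upper // PhiJ0 PsiJ_last !mulr1 big_mkord.
Qed.

Lemma Jmat_mul_green_col_mx_col0 i : (1 <= n)%N ->
  (J *m green_col_mx) i ord0 = D *+ (i == ord_max).
Proof.
move=> n_gt0; rewrite mxE -val_eqE -(jacobi_op_green n_gt0 (ltn_ord i) (leqnn _)).
by rewrite -sum_Jmat_row; apply: eq_bigr => j _; rewrite [X in _ * X]mxE.
Qed.

Lemma Jmat_mul_green_col_mx_lift i j :
  (J *m green_col_mx) i (lift ord0 j) = J i (lift ord0 j).
Proof.
rewrite mxE (bigD1 (lift ord0 j)) //= big1 => [|l ne_l]; last first.
  by rewrite [X in _ * X]mxE (negbTE ne_l) eq_sym (negbTE (neq_lift _ _)) mulr0.
by rewrite [X in _ * X]mxE eqxx eq_sym (negbTE (neq_lift _ _)) mulr1 addr0.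
Qed.

Lemma cofactor_Jmat : cofactor J ord_max ord0 = \prod_(i < n.+1) a i.
Proof.
rewrite /cofactor det_trig; last first.
  apply/forallP => i; apply/forallP => j; apply/implyP => lt_ij.
  rewrite !mxE -!val_eqE /= /bump leq0n leqNgt ltn_ord /= add0n add1n.
  by rewrite (ltn_eqF (leqW lt_ij)) eqSS (gtn_eqF lt_ij) (ltn_eqF (leqW (leqW lt_ij))).
rewrite (eq_bigr (fun i : 'I_n.+1 => - a i)) => [|i _]; last first.
  rewrite !mxE -!val_eqE /= /bump leq0n leqNgt ltn_ord /= add0n add1n.
  by rewrite (ltn_eqF (ltnSn i)) eqxx.
rewrite prodrN card_ord /= addn0 mulrA -exprD.
by rewrite -signr_odd oddD addbb expr0 mul1r.
Qed.

Lemma det_Jmat_mul_green_col_mx : (1 <= n)%N ->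
  \det (J *m green_col_mx) = D * \prod_(i < n.+1) a i.
Proof.
move=> n_gt0; rewrite (expand_det_col _ ord0) (bigD1 ord_max) //=.
rewrite big1 => [|i ne_i]; last first.
  by rewrite Jmat_mul_green_col_mx_col0 // (negbTE ne_i) mul0r.
rewrite Jmat_mul_green_col_mx_col0 // eqxx mulr1n addr0 -cofactor_Jmat /cofactor.
do 2!congr (_ * _); congr (\det _); apply/matrixP => i j.
by rewrite 2![LHS]mxE 2![RHS]mxE Jmat_mul_green_col_mx_lift.
Qed.

Lemma det_Jmat : (1 <= n)%N -> (forall k, (k <= n)%N -> a k != 0) -> \det J = D.
Proof.
move=> n_gt0 a_neq0.
have prod_a_neq0 : \prod_(i < n.+1) a i != 0.
  by apply/prodf_neq0 => i _; apply: a_neq0; rewrite -ltnS.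
apply: (mulIf prod_a_neq0).
by rewrite -[in LHS]det_green_col_mx -det_mulmx det_Jmat_mul_green_col_mx.
Qed.

End Tridiagonal.

Theorem theorem4p3 (R : realFieldType) (n : nat) (a b c : nat -> R) :
  (1 <= n)%N ->
  (forall k : nat, (k <= n)%N -> a k != 0) ->
  (forall k : nat, (k <= n)%N -> c k != 0) ->
  ((Jmat a b c n \in unitmx) <-> DJ a b c n != 0) /\
  (DJ a b c n != 0 ->
     (forall k s : 'I_(n.+2), invmx (Jmat a b c n) k s = rJ a b c n k s) /\
     \det (invmx (Jmat a b c n)) = (DJ a b c n)^-1).
Proof.
move=> n_gt0 a_neq0 _.
split; first by rewrite unitmxE det_Jmat // unitfE.
move=> D_neq0; have J_rJ := Jmat_mul_rJmx n_gt0 D_neq0.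
have [J_unit _] := mulmx1_unit J_rJ.
have invJ : invmx (Jmat a b c n) = \matrix_(i, j) rJ a b c n i j.
  by rewrite -[LHS]mulmx1 -J_rJ mulmxA mulVmx // mul1mx.
split; first by move=> k s; rewrite invJ mxE.
by rewrite det_inv det_Jmat.
Qed.
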